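(* Let $k=k(n)$ be an integer with $2\le k\le o\!\left(\frac{n}{\log n}\right)$. Then, as $n\to\infty$, $$\mathbb{E}\big[(X-\mathbb{E}X)^k\big]=\Theta\!\left(\sum_{\substack{V\le\mathbb{F}_2^k\\ V\text{ robust}}}|T_V|\cdot N^{-\lambda\dim V}\right),$$ the sum ranging over all robust linear subspaces $V$ of $\mathbb{F}_2^k$.
   Context: All logarithms are base 2 and $h$ is the binary entropy function. Fix rational $\gamma\in(0,\frac12)$ and rational $\lambda\in(0,h(\gamma))$. The integer $n$ ranges over values for which $\lambda n$ is an integer and $\gamma n$ is an even integer; asymptotics are as $n\to\infty$. Let $N=2^n$. Let $K$ be a uniformly random $\lambda n\times n$ matrix over $\mathbb{F}_2$, $C=\{x\in\mathbb{F}_2^n:Kx=0\}$, $L=\{x\in\mathbb{F}_2^n:\|x\|=\gamma n\}$ ($\|\cdot\|$ = Hamming weight), and $X=|C\cap L|$. For a subspace $U\le\mathbb{F}_2^k$ and $I\subseteq[k]$, $U_I$ denotes the projection $\{u_I:u\in U\}$ of $U$ onto the coordinates in $I$. Coordinate $i\in[k]$ is sensitive for $U$ if $\dim U_{[k]\setminus\{i\}}=\dim U-1$; $U$ is robust if it has no sensitive coordinate. For $U\le\mathbb{F}_2^k$, $T_U$ is the set of $k\times n$ binary matrices each of whose rows has weight exactly $\gamma n$ and each of whose columns lies in $U$. *)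

From HB Require Import structures.
From mathcomp Require Import all_boot all_order all_algebra.
From Stdlib Require Import Reals.

Set Implicit Arguments.
Unset Strict Implicit.
Unset Printing Implicit Defensive.

Local Open Scope ring_scope.

Definition hwt (n : nat) (u : 'rV['F_2]_n) : nat := #|[set j : 'I_n | u 0 j != 0]|.

Definition Xcount (m n w : nat) (K : 'M['F_2]_(m, n)) : nat :=
  #|[set x : 'cV['F_2]_n | (K *m x == 0) && (hwt x^T == w)]|.

(* Subspaces U of F_2^k are represented by their canonical generating
   square matrix A : 'M_k (the row space of A is U), i.e. those A with
   <<A>>%MS = A.  This gives a bijection with the subspaces of 'rV_k. *)
Definition is_subspace_rep (k : nat) (A : 'M['F_2]_k) : bool := (<<A>>%MS == A).

(* dim U = \rank A ; projection of U deleting coordinate i has dimension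
   \rank (col' i A).  Coordinate i is sensitive iff
   dim U_{[k]\{i}} = dim U - 1. *)
Definition sensitive (k : nat) (A : 'M['F_2]_k) (i : 'I_k) : bool :=
  ((\rank (col' i A)).+1 == \rank A)%N.

Definition robust (k : nat) (A : 'M['F_2]_k) : bool :=
  [forall i : 'I_k, ~~ sensitive A i].

Definition T_set (k n w : nat) (A : 'M['F_2]_k) : {set 'M['F_2]_(k, n)} :=
  [set M : 'M['F_2]_(k, n) |
     [forall i : 'I_k, hwt (row i M) == w] &&
     [forall j : 'I_n, ((col j M)^T <= A)%MS]].

Local Close Scope ring_scope.

Local Open Scope R_scope.

Definition log2 (x : R) : R := ln x / ln 2.

Definition hbin (x : R) : R := - x * log2 x - (1 - x) * log2 (1 - x).

Definition Rsum (T : finType) (f : T -> R) : R := \big[Rplus/0]_(t : T) f t.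

(* K uniform over the 2^(m n) matrices of size m x n (m = lambda n) *)
Definition EX (m n w : nat) : R :=
  Rsum (fun K : 'M['F_2]_(m, n) => INR (Xcount w K)) / 2 ^ (m * n).

Definition central_moment (k m n w : nat) : R :=
  Rsum (fun K : 'M['F_2]_(m, n) => (INR (Xcount w K) - EX m n w) ^ k) / 2 ^ (m * n).

(* sum over robust subspaces V of F_2^k of |T_V| N^{-lambda dim V},
   with N^{-lambda dim V} = 2^{-(lambda n) dim V} = 1 / 2^(m dim V) *)
Definition robust_sum (k m n w : nat) : R :=
  Rsum (fun A : 'M['F_2]_k =>
          if is_subspace_rep A && robust A
          then INR #|T_set n w A| / 2 ^ (m * \rank A)
          else 0).

Definition admissible (gamma lambda : R) (n m w : nat) : Prop :=
  lambda * INR n = INR m /\ gamma * INR n = INR w /\ ~~ odd w.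

Definition is_rational (x : R) : Prop :=
  exists (a : Z) (b : nat), (0 < b)%nat /\ x = IZR a / INR b.

From Stdlib Require Import Reals Lra Lia.
From HB Require Import structures.
From mathcomp Require Import all_boot all_order all_algebra.
From mathcomp Require Import zify lra Rstruct.

(* Put p = 2^-m.  For a uniform m x n matrix K and a fixed n x s matrix Y,
   P[K Y = 0] = p^(rank Y).  Writing X - E X = sum_x (1[K x = 0] - p) over the
   weight-w vectors x and expanding the k-th power, E (X - E X)^k is a sum over
   the k x n matrices M whose rows have weight w of
       g(M) = sum_(D ⊆ [k]) (-p)^|D| p^(rank M - dim (U ∩ F^D)),
   where U is the column space of M, a subspace of F_2^k, and F^D is the
   coordinate subspace spanned by the unit vectors e_i, i ∈ D.
   (1) If some e_i lies in U, the terms D and D + i cancel, so g(M) = 0.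
   (2) Otherwise dim (U ∩ F^D) < |D| for D nonempty, hence as soon as
       2^k p <= 1/2 we get p^rank M / 2 <= g(M) <= 2 p^rank M.
   Exchanging sums, the robust sum is the sum over the same M of h(M), the
   sum of p^dim V over the robust subspaces V containing U.  A coordinate is
   sensitive for V exactly when e_i ∈ V, so h(M) = 0 in case (1), while in
   case (2) V = U is robust and counting the superspaces of U of each
   dimension gives p^rank M <= h(M) <= 2 p^rank M.  Comparing g and h
   termwise yields the constants 1/4 and 2.  The hypotheses w >= 1 and
   2^k p <= 1/2 hold for large admissible n because k = o(n / log n). *)

Set Implicit Arguments.
Unset Strict Implicit.
Unset Printing Implicit Defensive.
Import Order.TTheory GRing.Theory Num.Theory.
Local Open Scope ring_scope.

Section CoordinateSubspaces.
Variables (F : fieldType) (k : nat).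
Implicit Types (S D : {set 'I_k}).

Local Notation unitv i := (delta_mx 0 i : 'rV[F]_k).

Lemma kermx_col'1 (i : 'I_k) : (kermx (col' i (1%:M : 'M[F]_k)) :=: unitv i)%MS.
Proof.
apply/eqmxP/andP; split; last first.
  rewrite sub_kermx col'Esub mulmx_colsub mulmx1; apply/eqP/matrixP => a b.
  by rewrite !mxE lift_eqF andbF.
apply/row_subP => r; set v := row r _.
have kv : v *m col' i 1%:M = 0 by rewrite /v -row_mul mulmx_ker row0.
clearbody v; suff -> : v = v 0 i *: unitv i by rewrite scalemx_sub.
apply/matrixP => a b; rewrite !mxE (ord1 a) eqxx /=.
case: (unliftP i b) => [j ->|->]; last by rewrite eqxx mulr1.
move/matrixP: kv => /(_ 0 j); rewrite col'Esub mulmx_colsub mulmx1 !mxE => ->.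
by rewrite lift_eqF mulr0.
Qed.

Lemma rank_cap_unitv r (A : 'M[F]_(r, k)) (i : 'I_k) :
  \rank (A :&: unitv i)%MS = (unitv i <= A)%MS.
Proof.
have [iA|iNA] := boolP (unitv i <= A)%MS.
  by rewrite (capmx_idPr iA).1 mxrank_delta.
move: (mxrank_leqif_sup (capmxSr A (unitv i))) => /leqifP.
case: ifP => [sub|_]; first by case/negP: iNA; exact: submx_trans sub (capmxSl _ _).
by rewrite mxrank_delta ltnS leqn0 => /eqP ->.
Qed.

(* coordmx S is the diagonal 0/1 matrix selecting the coordinates in S; its
   row space is the coordinate subspace F^S spanned by the e_i, i ∈ S. *)
Definition coordmx S : 'M[F]_k := diag_mx (\row_i (i \in S)%:R).

Lemma row_coordmx S j : row j (coordmx S) = if j \in S then unitv j else 0.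
Proof.
apply/rowP => b; rewrite !mxE; case: (j \in S); rewrite ?mxE /=.
  by rewrite eq_sym mulr1n.
by rewrite mul0rn.
Qed.

Lemma unitv_sub_coordmx S i : (unitv i <= coordmx S)%MS = (i \in S).
Proof.
have [iS|iNS] := boolP (i \in S).
  by rewrite -[unitv i](_ : row i (coordmx S) = _) ?row_sub // row_coordmx iS.
apply/negP => /submxP [X] /matrixP /(_ 0 i).
by rewrite mul_mx_diag !mxE (negbTE iNS) mulr0 !eqxx /= => /eqP; rewrite oner_eq0.
Qed.

Lemma coordmx_subP S m (X : 'M[F]_(m, k)) :
  reflect (forall j, j \in S -> (unitv j <= X)%MS) (coordmx S <= X)%MS.
Proof.
apply: (iffP idP) => [sSX j jS|sSX].
  by apply: submx_trans sSX; rewrite unitv_sub_coordmx.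
apply/row_subP => j; rewrite row_coordmx; case: ifP => jS; first exact: sSX.
exact: sub0mx.
Qed.

Lemma kermx_coordmx S : (kermx (coordmx S) :=: coordmx (~: S))%MS.
Proof.
have coordmxD : coordmx S + coordmx (~: S) = 1%:M.
  apply/matrixP => a b; rewrite !mxE in_setC.
  by case: (a \in S); case: (a == b); rewrite /= ?addr0 ?add0r.
apply/eqmxP/andP; split.
  have -> : kermx (coordmx S) = kermx (coordmx S) *m coordmx (~: S).
    by rewrite -[LHS]mulmx1 -coordmxD mulmxDr mulmx_ker add0r.
  exact: submxMl.
rewrite sub_kermx; apply/eqP/matrixP => a b.
rewrite mul_diag_mx !mxE in_setC.
by case: (a \in S); case: (a == b); rewrite /= ?mulr0 ?mul0r.
Qed.

Lemma rank_coordmx_le S : (\rank (coordmx S) <= #|S|)%N.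
Proof.
pose E : 'M[F]_(#|S|, k) := \matrix_(j < #|S|) unitv (enum_val j).
apply: leq_trans (rank_leq_row E); apply: mxrankS; apply/coordmx_subP => j jS.
by rewrite -(enum_rankK_in jS jS) -(rowK (fun j => unitv (enum_val j))) row_sub.
Qed.

Lemma coordmx_setU1 S i : (coordmx (i |: S) :=: unitv i + coordmx S)%MS.
Proof.
apply/eqmxP/andP; split.
  apply/coordmx_subP => j; rewrite in_setU1 => /orP [/eqP ->|jS].
    exact: addsmxSl.
  by apply: submx_trans (addsmxSr _ _); rewrite unitv_sub_coordmx.
rewrite addsmx_sub unitv_sub_coordmx setU11 /=.
by apply/coordmx_subP => j jS; rewrite unitv_sub_coordmx in_setU1 jS orbT.
Qed.

Definition meet_rank s (U : 'M[F]_(s, k)) D := \rank (U :&: coordmx D)%MS.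

Lemma meet_rank0 s (U : 'M[F]_(s, k)) : meet_rank U set0 = 0%N.
Proof.
apply/eqP; rewrite -leqn0 -(cards0 'I_k).
by apply: leq_trans (rank_coordmx_le _); apply/mxrankS/capmxSr.
Qed.

Lemma meet_rank_le s (U : 'M[F]_(s, k)) D : (meet_rank U D <= \rank U)%N.
Proof. exact/mxrankS/capmxSl. Qed.

Lemma meet_rank_setU1 s (U : 'M[F]_(s, k)) D i :
  (unitv i <= U)%MS -> i \notin D -> meet_rank U (i |: D) = (meet_rank U D).+1.
Proof.
move=> iU iND; rewrite /meet_rank.
have meetU1 : (U :&: coordmx (i |: D) :=: unitv i + (coordmx D :&: U))%MS.
  apply: eqmx_trans (cap_eqmx (eqmx_refl U) (coordmx_setU1 D i)) _.
  by rewrite capmxC; apply: eqmx_sym; exact: matrix_modl iU.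
rewrite meetU1.1.
have := mxrank_sum_cap (unitv i) (coordmx D :&: U)%MS.
rewrite [(unitv i :&: _)%MS]capmxC rank_cap_unitv mxrank_delta capmxC.
have -> : (unitv i <= U :&: coordmx D)%MS = false.
  apply/negP => /(submx_trans)/(_ (capmxSr _ _)).
  by rewrite unitv_sub_coordmx (negbTE iND).
by rewrite addn0 add1n.
Qed.

Lemma meet_rank_lt_card s (U : 'M[F]_(s, k)) D :
  (forall i, ~~ (unitv i <= U)%MS) -> D != set0 -> (meet_rank U D < #|D|)%N.
Proof.
move=> noUnit /set0Pn [i iD]; apply: leq_trans (rank_coordmx_le D).
move: (mxrank_leqif_sup (capmxSr U (coordmx D))) => /leqifP; case: ifP => // sub _.
have /coordmx_subP/(_ i iD) : (coordmx D <= U)%MS by apply: submx_trans sub (capmxSl _ _).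
by rewrite (negbTE (noUnit i)).
Qed.

Lemma rank_rows_split n (M : 'M[F]_(k, n)) S :
  (\rank (coordmx S *m M) + meet_rank M^T (~: S))%N = \rank M.
Proof.
rewrite -mxrank_tr trmx_mul tr_diag_mx -(mxrank_tr M) /meet_rank.
rewrite -(mxrank_mul_ker M^T (coordmx S)); congr (_ + _)%N.
by rewrite (cap_eqmx (eqmx_refl M^T) (kermx_coordmx S)).1.
Qed.

End CoordinateSubspaces.

Lemma sensitiveE k (A : 'M['F_2]_k) (i : 'I_k) :
  sensitive A i = ((delta_mx 0 i : 'rV['F_2]_k) <= A)%MS.
Proof.
have rank_del := mxrank_mul_ker A (col' i (1%:M : 'M['F_2]_k)).
have delE : A *m col' i 1%:M = col' i A by rewrite col'Esub mulmx_colsub mulmx1.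
rewrite delE (cap_eqmx (eqmx_refl A) (kermx_col'1 _ i)).1 rank_cap_unitv in rank_del.
by rewrite /sensitive; case: (_ <= A)%MS rank_del => /= ?; apply/eqP; lia.
Qed.

Section FiniteFieldCounting.
Variable F : finFieldType.

Lemma card_submx m n (Z : 'M[F]_n) :
  #|[set K : 'M[F]_(m, n) | (K <= Z)%MS]| = (#|F| ^ (m * \rank Z))%N.
Proof.
have -> : [set K : 'M[F]_(m, n) | (K <= Z)%MS] =
          [set C *m row_base Z | C in [set: 'M[F]_(m, \rank Z)]].
  apply/setP => K; rewrite inE; apply/idP/imsetP.
    by rewrite -(eq_row_base Z) => /submxP [D ->]; exists D; rewrite ?inE.
  by case=> C _ ->; rewrite -(eq_row_base Z) submxMl.
by rewrite card_imset ?cardsT ?card_mx //; exact: row_free_inj (row_base_free Z).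
Qed.

Lemma card_kermx m n s (Y : 'M[F]_(n, s)) :
  #|[set K : 'M[F]_(m, n) | K *m Y == 0]| = (#|F| ^ (m * (n - \rank Y)))%N.
Proof.
rewrite -mxrank_ker -card_submx; apply: eq_card => K.
by rewrite !inE sub_kermx.
Qed.

(* A subspace of dimension rank U + j containing U is spanned by U and j more
   vectors, so there are at most |F|^(j k) of them. *)
Lemma card_superspaces k s (U : 'M[F]_(s, k)) j :
  (#|[set A : 'M[F]_k | [&& <<A>>%MS == A, (U <= A)%MS & \rank A == \rank U + j]]|
     <= #|F| ^ (j * k))%N.
Proof.
pose span_with (B : 'M[F]_(j, k)) := <<(U + B)%MS>>%MS.
apply: (@leq_trans #|span_with @: [set: 'M[F]_(j, k)]|); last first.
  by apply: leq_trans (leq_imset_card _ _) _; rewrite cardsT card_mx.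
apply/subset_leq_card/subsetP => A; rewrite inE => /and3P [/eqP genA UA /eqP rkA].
have rk_diff : \rank (A :\: U)%MS = j.
  by have := mxrank_cap_compl A U; rewrite (capmx_idPr UA).1 rkA; lia.
pose B : 'M[F]_(j, k) := castmx (rk_diff, erefl k) (row_base (A :\: U)%MS).
have eqB : (B :=: A :\: U)%MS.
  exact: eqmx_trans (eqmx_cast _ _) (eq_row_base _).
apply/imsetP; exists B; rewrite ?inE // /span_with -{1}genA; apply: eq_genmx.
apply: eqmx_sym; apply: eqmx_trans (adds_eqmx (eqmx_refl U) eqB) _.
rewrite addsmxC; apply: eqmx_trans _ (addsmx_diff_cap_eq A U).
by apply: adds_eqmx; [exact: eqmx_refl|apply: eqmx_sym; exact: capmx_idPr].
Qed.

End FiniteFieldCounting.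

Section RingSums.
Variable R : comNzRingType.

Lemma card_set_sum (T : finType) (b : pred T) :
  (#|[set x | b x]|%:R : R) = \sum_x (b x)%:R.
Proof.
rewrite -sum1_card natr_sum big_mkcond /=.
by apply: eq_bigr => x _; rewrite inE; case: (b x).
Qed.

Lemma if_sum (I : finType) (P : pred I) (f : I -> R) (b : bool) :
  (if b then \sum_(i | P i) f i else 0) = \sum_(i | P i) (if b then f i else 0).
Proof. by case: b; rewrite // big1. Qed.

Lemma prod_indicator (I : finType) (P : pred I) (b : I -> bool) :
  \prod_(i | P i) ((b i)%:R : R) = [forall (i | P i), b i]%:R.
Proof.
have [all_b|] := boolP [forall (i | P i), b i].
  by rewrite big1 // => i Pi; move/forall_inP: all_b => /(_ i Pi) ->.
move/forall_inPn => [i Pi /negbTE bi].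
by rewrite (bigD1 i) //= bi mul0r.
Qed.

Lemma expr_sum_rows (F : finType) k n (P : pred 'rV[F]_n) (a : 'cV[F]_n -> R) :
  (\sum_(x | P x^T) a x) ^+ k =
  \sum_(M : 'M[F]_(k, n) | [forall i, P (row i M)]) \prod_i a (row i M)^T.
Proof.
rewrite -[k in LHS]card_ord -prodr_const bigA_distr_big /=.
pose rows (M : 'M[F]_(k, n)) : {ffun 'I_k -> 'cV[F]_n} := [ffun i => (row i M)^T].
pose unrows (f : {ffun 'I_k -> 'cV[F]_n}) : 'M[F]_(k, n) := \matrix_(i, j) f i j 0.
rewrite (reindex rows); last first.
  exists unrows => [M _|f _]; first by apply/matrixP => i j; rewrite !mxE ffunE !mxE.
  by apply/ffunP => i; apply/matrixP => j z; rewrite ffunE (ord1 z) !mxE.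
apply: eq_big => [M|M _]; last by apply: eq_bigr => i _; rewrite ffunE.
by apply/ffun_onP/forallP => Prow i; have := Prow i; rewrite ffunE unfold_in /= trmxK.
Qed.

End RingSums.

Lemma geometric_le2 (R : realFieldType) (x : R) N :
  0 <= x -> x <= 2^-1 -> \sum_(j < N) x ^+ j <= 2%:R.
Proof.
move=> x0 x1; suff : \sum_(j < N) x ^+ j <= 2%:R - 2%:R * x ^+ N.
  by move=> h; apply: le_trans h _; have := exprn_ge0 N x0; lra.
elim: N => [|N IH]; first by rewrite big_ord0 expr0; lra.
rewrite big_ord_recr /= exprS.
have xN0 := exprn_ge0 N x0.
have : x * x ^+ N <= 2^-1 * x ^+ N by apply: ler_wpM2r.
lra.
Qed.

Lemma card_sets k : #|{set 'I_k}| = (2 ^ k)%N.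
Proof. by rewrite -cardsT -powersetT card_powerset cardsT card_ord. Qed.

Lemma R2E : (2 : R)%R = 2%:R :> R.
Proof. by rewrite IZRposE INRE. Qed.

Section Moments.
Variables m n w k : nat.

Local Notation unitv i := (delta_mx 0 i : 'rV['F_2]_k).

(* p = 2^-m is the probability that a fixed nonzero vector lies in ker K. *)
Definition p : R := (2%:R ^+ m)^-1.

Lemma p_gt0 : 0 < p.
Proof. by rewrite invr_gt0 exprn_gt0 // ltr0n. Qed.

Lemma p_le1 : p <= 1.
Proof. by rewrite invr_le1 ?exprn_ege1 ?ler1n ?unitfE ?expf_neq0 ?pnatr_eq0 // exprn_gt0. Qed.

Lemma pX_ge0 r : 0 <= p ^+ r.
Proof. exact/exprn_ge0/ltW/p_gt0. Qed.

Definition kerind s (K : 'M['F_2]_(m, n)) (Y : 'M['F_2]_(n, s)) : R := (K *m Y == 0)%:R.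

Lemma mean_kerind s (Y : 'M['F_2]_(n, s)) :
  (\sum_(K : 'M['F_2]_(m, n)) kerind K Y) / 2%:R ^+ (m * n) = p ^+ \rank Y.
Proof.
rewrite -card_set_sum card_kermx card_Fp // natrX.
have -> : (m * n = m * (n - \rank Y) + m * \rank Y)%N.
  by rewrite -mulnDr subnK // rank_leq_row.
rewrite exprD invfM mulrA divff ?expf_neq0 ?pnatr_eq0 // mul1r.
by rewrite exprM /p exprVn.
Qed.

(* The zero vector has weight 0, so it is excluded from L when w >= 1. *)
Lemma hwt0 : hwt (0 : 'rV['F_2]_n) = 0%N.
Proof. by apply/eqP; rewrite cards_eq0; apply/eqP/setP => j; rewrite !inE mxE eqxx. Qed.

Lemma Xcount_sum K : ((Xcount w K)%:R : R) = \sum_(x : 'cV['F_2]_n | hwt x^T == w) kerind K x.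
Proof.
rewrite /Xcount -sum1_card natr_sum big_mkcond /= [RHS]big_mkcond /=.
by apply: eq_bigr => x _; rewrite inE /kerind; case: (_ == 0); case: (_ == w).
Qed.

(* For w >= 1 every summand of X is a nonzero vector: E X = |L| p. *)
Lemma EX_sum : (1 <= w)%N -> EX m n w = \sum_(x : 'cV['F_2]_n | hwt x^T == w) p.
Proof.
move=> w_gt0; rewrite /EX /Rsum RdivE RpowE R2E.
under eq_bigr do rewrite INRE Xcount_sum.
rewrite exchange_big /= mulr_suml; apply: eq_bigr => x xw.
rewrite mean_kerind -mxrank_tr rank_rV.
have -> // : x^T != 0.
by apply: contraTneq xw => ->; rewrite hwt0 eq_sym -lt0n.
Qed.

Lemma prod_kerind K (M : 'M['F_2]_(k, n)) (S : {set 'I_k}) :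
  \prod_(i in S) kerind K (row i M)^T = kerind K (coordmx _ S *m M)^T.
Proof.
have rowK a i : (K *m (row i M)^T) a 0 = (K *m M^T) a i.
  by rewrite !mxE; apply: eq_bigr => j _; rewrite !mxE.
rewrite /kerind prod_indicator; congr (_%:R); congr (nat_of_bool _); apply/idP/idP.
  move/forall_inP => kerS; apply/eqP/matrixP => a i.
  rewrite trmx_mul tr_diag_mx mulmxA mul_mx_diag !mxE.
  have [iS|] := boolP (i \in S); last by rewrite mulr0.
  by move: (kerS i iS) => /eqP /matrixP /(_ a 0); rewrite rowK !mxE => ->; rewrite mul0r.
move/eqP/matrixP => kerS; apply/forall_inP => i iS; apply/eqP/matrixP => a z.
move: (kerS a i); rewrite (ord1 z) rowK trmx_mul tr_diag_mx mulmxA mul_mx_diag !mxE iS.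
by rewrite mulr1.
Qed.

Lemma prod_centred_kerind K (M : 'M['F_2]_(k, n)) :
  \prod_(i < k) (kerind K (row i M)^T - p) =
  \sum_(S : {set 'I_k}) (- p) ^+ #|~: S| * kerind K (coordmx _ S *m M)^T.
Proof.
rewrite bigA_distr; apply: eq_bigr => S _.
rewrite (bigID (mem S)) /= -prod_kerind mulrC; congr (_ * _).
  rewrite -prodr_const; apply: eq_big => [i|i]; first by rewrite in_setC.
  by move=> /negbTE ->.
by apply: eq_bigr => i ->.
Qed.

(* g(M): the expected contribution of the row tuple M to (X - E X)^k. *)
Definition moment_term (M : 'M['F_2]_(k, n)) : R :=
  \sum_(S : {set 'I_k}) (- p) ^+ #|~: S| * p ^+ \rank (coordmx _ S *m M).

Lemma central_moment_sum : (1 <= w)%N -> central_moment k m n w =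
  \sum_(M : 'M['F_2]_(k, n) | [forall i, hwt (row i M) == w]) moment_term M.
Proof.
move=> w_gt0; rewrite /central_moment /Rsum RdivE RpowE R2E (EX_sum w_gt0).
under eq_bigr => K _.
  rewrite RpowE RminusE INRE Xcount_sum -sumrB (@expr_sum_rows _ _ k n (fun u => hwt u == w)).
  under eq_bigr do rewrite prod_centred_kerind.
  over.
rewrite /= exchange_big mulr_suml; apply: eq_bigr => M _.
rewrite exchange_big mulr_suml; apply: eq_bigr => S _.
by rewrite -mulr_sumr -mulrA mean_kerind mxrank_tr.
Qed.

(* Indexing by the complement D = ~S, the rank drop is dim (colspace M ∩ F^D). *)
Lemma moment_termE (M : 'M['F_2]_(k, n)) : moment_term M =
  \sum_(D : {set 'I_k}) (- p) ^+ #|D| * p ^+ (\rank M - meet_rank M^T D).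
Proof.
rewrite /moment_term (reindex_inj (@setC_inj _)) /=; apply: eq_bigr => D _.
by rewrite setCK -(rank_rows_split M (~: D)) setCK addnK.
Qed.

Definition robust_cols (M : 'M['F_2]_(k, n)) : bool := robust <<M^T>>%MS.

Lemma robust_colsP (M : 'M['F_2]_(k, n)) :
  reflect (forall i, ~~ (unitv i <= M^T)%MS) (robust_cols M).
Proof.
rewrite /robust_cols /robust; apply: (iffP forallP) => noUnit i;
by have := noUnit i; rewrite sensitiveE genmxE.
Qed.

(* Case (1): if e_i ∈ colspace M, the terms D and D + i cancel. *)
Lemma moment_term_nonrobust (M : 'M['F_2]_(k, n)) i :
  (unitv i <= M^T)%MS -> moment_term M = 0.
Proof.
move=> iM; rewrite moment_termE (bigID [pred D : {set 'I_k} | i \in D]) /=.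
rewrite (reindex_onto (fun D => i |: D) (fun D => D :\ i)) /=; last first.
  by move=> D iD; rewrite setD1K.
have addiK D : ((i \in i |: D) && ((i |: D) :\ i == D)) = (i \notin D).
  rewrite setU11 /=; have [iD|iND] := boolP (i \in D); last by rewrite setU1K // eqxx.
  by apply/negbTE/eqP => eD; move: iD; rewrite -eD setD11.
under eq_bigl do rewrite addiK.
rewrite -big_split /=; apply: big1 => D iND.
have meet_le := meet_rank_le M^T (i |: D).
rewrite meet_rank_setU1 // mxrank_tr in meet_le.
rewrite meet_rank_setU1 // cardsU1 iND add1n.
have -> : (\rank M - meet_rank M^T D = (\rank M - (meet_rank M^T D).+1).+1)%N by lia.
by rewrite !exprS addrC !mulNr mulrCA mulrA subrr.
Qed.

(* Case (2): every D ≠ ∅ contributes at most p^(rank M + 1) in absolute value. *)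
Lemma moment_term_tail (M : 'M['F_2]_(k, n)) : robust_cols M ->
  `|moment_term M - p ^+ \rank M| <= 2%:R ^+ k * p * p ^+ \rank M.
Proof.
move/robust_colsP => noUnit.
rewrite moment_termE (bigD1 set0) //= cards0 meet_rank0 subn0 expr0 mul1r addrAC subrr add0r.
apply: le_trans (ler_norm_sum _ _ _) _.
apply: (@le_trans _ _ (\sum_(D : {set 'I_k}) p ^+ (\rank M).+1)); last first.
  by rewrite sumr_const card_sets -[X in X <= _]mulr_natr natrX exprS mulrC mulrA.
apply: (@le_trans _ _ (\sum_(D | D != set0) p ^+ (\rank M).+1)).
  apply: ler_sum => D nonempty.
  rewrite normrM !normrX normrN (ger0_norm (ltW p_gt0)) -exprD.
  apply: ler_wiXn2l; [exact: ltW p_gt0|exact: p_le1|].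
  have := meet_rank_lt_card noUnit nonempty; have := meet_rank_le M^T D.
  rewrite mxrank_tr => meet_le meet_lt.
  by rewrite -[X in (X < _)%N](subnK meet_le) [X in (_ < X)%N]addnC ltn_add2l.
by rewrite [X in _ <= X](bigD1 set0) //= lerDr pX_ge0.
Qed.

Lemma moment_term_bounds (M : 'M['F_2]_(k, n)) : robust_cols M -> 2%:R ^+ k * p <= 2^-1 ->
  p ^+ \rank M / 2%:R <= moment_term M /\ moment_term M <= 2%:R * p ^+ \rank M.
Proof.
move=> robM small; have q_ge0 := pX_ge0 (\rank M).
have tail_le : 2%:R ^+ k * p * p ^+ \rank M <= p ^+ \rank M / 2%:R.
  by rewrite [X in _ <= X]mulrC; apply: ler_wpM2r.
move: (moment_term_tail robM) tail_le q_ge0.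
set q := p ^+ \rank M; set t := 2%:R ^+ k * p * q; set g := moment_term M.
by rewrite ler_norml => /andP [lo hi] tail_le q_ge0; split; lra.
Qed.

Definition robust_term (M : 'M['F_2]_(k, n)) : R :=
  \sum_(A : 'M['F_2]_k)
     (if [&& is_subspace_rep A, robust A & (M^T <= A)%MS] then p ^+ \rank A else 0).

Lemma card_T_set (A : 'M['F_2]_k) : (#|T_set n w A|%:R : R) =
  \sum_(M : 'M['F_2]_(k, n) | [forall i, hwt (row i M) == w]) ((M^T <= A)%MS)%:R.
Proof.
rewrite /T_set -sum1_card natr_sum big_mkcond /= [RHS]big_mkcond /=.
apply: eq_bigr => M _; rewrite inE.
have -> : [forall j, ((col j M)^T <= A)%MS] = (M^T <= A)%MS.
  by apply/forallP/row_subP => colsA j; have := colsA j; rewrite tr_col.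
by case: [forall i, _]; case: (M^T <= A)%MS.
Qed.

Lemma robust_sum_terms : robust_sum k m n w =
  \sum_(M : 'M['F_2]_(k, n) | [forall i, hwt (row i M) == w]) robust_term M.
Proof.
rewrite /robust_sum /Rsum.
under eq_bigr => A _.
  rewrite RdivE INRE RpowE R2E exprM -exprVn -/p card_T_set mulr_suml if_sum.
  over.
rewrite exchange_big; apply: eq_bigr => M _; apply: eq_bigr => A _.
by rewrite andbA; case: (_ && _); case: (M^T <= A)%MS; rewrite /= ?mul1r ?mul0r.
Qed.

(* Case (1) for h: a robust subspace contains no unit vector. *)
Lemma robust_term_nonrobust (M : 'M['F_2]_(k, n)) i :
  (unitv i <= M^T)%MS -> robust_term M = 0.
Proof.
move=> iM; apply: big1 => A _.
have [MA|] := boolP (M^T <= A)%MS; last by rewrite !andbF.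
suff -> : robust A = false by rewrite andbF.
by apply/negbTE/forallPn; exists i; rewrite negbK sensitiveE (submx_trans iM MA).
Qed.

(* Case (2) for h: colspace M itself is one of the robust superspaces. *)
Lemma robust_term_ge (M : 'M['F_2]_(k, n)) : robust_cols M -> p ^+ \rank M <= robust_term M.
Proof.
move=> robM; rewrite /robust_term (bigD1 <<M^T>>%MS) //=.
rewrite /is_subspace_rep genmx_id eqxx (robM : robust <<M^T>>%MS) genmxE submx_refl mxrank_gen mxrank_tr lerDl.
by apply: sumr_ge0 => A _; case: ifP => // _; exact: pX_ge0.
Qed.

Lemma superspace_layer_le s (U : 'M['F_2]_(s, k)) j :
  \sum_(A : 'M['F_2]_k)
     (if [&& is_subspace_rep A, (U <= A)%MS & \rank A == \rank U + j]%N
      then p ^+ \rank A else 0)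
  <= p ^+ \rank U * (2%:R ^+ k * p) ^+ j.
Proof.
have -> : \sum_(A : 'M['F_2]_k)
     (if [&& is_subspace_rep A, (U <= A)%MS & \rank A == \rank U + j]%N
      then p ^+ \rank A else 0) =
  #|[set A : 'M['F_2]_k | [&& <<A>>%MS == A, (U <= A)%MS & \rank A == \rank U + j]]|%:R
     * p ^+ (\rank U + j).
  rewrite card_set_sum mulr_suml; apply: eq_bigr => A _; rewrite /is_subspace_rep.
  by case: ifP => [/and3P [_ _ /eqP ->]|_]; rewrite ?mul1r ?mul0r.
apply: le_trans (ler_wpM2r (pX_ge0 _) (_ : _ <= (2 ^ (j * k))%:R)) _.
  by rewrite ler_nat; have := card_superspaces U j; rewrite card_Fp.
by rewrite natrX mulnC exprM exprMn exprD mulrCA mulrA.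
Qed.

Lemma superspace_sum_le s (U : 'M['F_2]_(s, k)) :
  \sum_(A : 'M['F_2]_k) (if is_subspace_rep A && (U <= A)%MS then p ^+ \rank A else 0)
  <= p ^+ \rank U * \sum_(j < k.+1) (2%:R ^+ k * p) ^+ j.
Proof.
have layers A : (if is_subspace_rep A && (U <= A)%MS then p ^+ \rank A else 0) =
    \sum_(j < k.+1) (if [&& is_subspace_rep A, (U <= A)%MS & \rank A == \rank U + j]%N
                     then p ^+ \rank A else 0).
  case: ifP => [/andP [subA UA]|notUA]; last by rewrite big1 // => j _; rewrite andbA notUA.
  have rk_lt : (\rank A - \rank U < k.+1)%N by have := rank_leq_row A; lia.
  rewrite (bigD1 (Ordinal rk_lt)) //= subnKC ?mxrankS // eqxx subA UA big1 ?addr0 // => j jN.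
  case: eqP => // rkA; case/negP: jN; apply/eqP/val_inj => /=.
  by rewrite rkA addKn.
under eq_bigr do rewrite layers.
rewrite exchange_big mulr_sumr; apply: ler_sum => j _; exact: superspace_layer_le.
Qed.

(* Case (2) for h, upper bound: drop robustness and sum the geometric series. *)
Lemma robust_term_le (M : 'M['F_2]_(k, n)) :
  2%:R ^+ k * p <= 2^-1 -> robust_term M <= 2%:R * p ^+ \rank M.
Proof.
move=> small; apply: le_trans (_ : _ <= \sum_(A : 'M['F_2]_k)
    (if is_subspace_rep A && (M^T <= A)%MS then p ^+ \rank A else 0)) _.
  apply: ler_sum => A _; case: (is_subspace_rep A); case: (robust A);
    case: (M^T <= A)%MS => //=; exact: pX_ge0.
apply: le_trans (superspace_sum_le M^T) _; rewrite mxrank_tr mulrC.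
apply: ler_wpM2r; first exact: pX_ge0.
by apply: geometric_le2 => //; apply: mulr_ge0; [exact: exprn_ge0|exact: ltW p_gt0].
Qed.

Lemma term_comparison (M : 'M['F_2]_(k, n)) : 2%:R ^+ k * p <= 2^-1 ->
  robust_term M / 4%:R <= moment_term M /\ moment_term M <= 2%:R * robust_term M.
Proof.
move=> small; have [robM|] := boolP (robust_cols M).
  have [g_lo g_hi] := moment_term_bounds robM small.
  have h_lo := robust_term_ge robM; have h_hi := robust_term_le M small.
  move: g_lo g_hi h_lo h_hi.
  set q := p ^+ \rank M; set g := moment_term M; set h := robust_term M.
  by move=> g_lo g_hi h_lo h_hi; split; lra.
rewrite /robust_cols /robust negb_forall => /existsP [i].
rewrite negbK sensitiveE genmxE => iM.
by rewrite (moment_term_nonrobust iM) (robust_term_nonrobust iM) mul0r mulr0.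
Qed.

End Moments.

Lemma moment_vs_robust_sum m n w k : (1 <= w)%N -> 2%:R ^+ k * p m <= 2^-1 ->
  robust_sum k m n w / 4%:R <= central_moment k m n w /\
  central_moment k m n w <= 2%:R * robust_sum k m n w.
Proof.
move=> w_gt0 small; rewrite central_moment_sum // robust_sum_terms mulr_suml mulr_sumr.
by split; apply: ler_sum => M _; have [] := term_comparison M small.
Qed.

Lemma small_pk m k : (k < m)%N -> 2%:R ^+ k * p m <= 2^-1.
Proof.
move=> km.
have pow_le : (2%:R : R) ^+ k.+1 <= 2%:R ^+ m by apply: ler_weXn2l; rewrite ?ler1n.
have m_pos : (0 : R) < 2%:R ^+ m by rewrite exprn_gt0 ?ltr0n.
have k_pos : (0 : R) <= 2%:R ^+ k by rewrite exprn_ge0 ?ler0n.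
rewrite /p -[_ * _^-1]/(_ / _) ler_pdivrMr // exprS in pow_le *.
lra.
Qed.

Local Close Scope ring_scope.
Local Open Scope R_scope.

Lemma log2_ge1 (x : R) : 2 <= x -> 1 <= log2 x.
Proof.
move=> x_ge2; have ln2_pos : 0 < ln 2 by rewrite -ln_1; apply: ln_increasing; Lra.lra.
rewrite /log2 /Rdiv -(Rinv_r (ln 2) (Rgt_not_eq _ _ ln2_pos)).
apply: Rmult_le_compat_r; first by left; apply: Rinv_0_lt_compat.
case: (Rle_lt_or_eq_dec _ _ x_ge2) => [x_gt2|<-]; last exact: Rle_refl.
by left; apply: ln_increasing; Lra.lra.
Qed.

(* Along admissible n, eventually w >= 1 and k(n) < m: the hypothesis
   k <= (lambda/2) n / log2 n gives k <= m / 2, while m = lambda n -> oo. *)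
Lemma admissible_eventually (gamma lambda : R) (k : nat -> nat) :
  0 < gamma -> 0 < lambda ->
  (forall eps, 0 < eps -> exists n0 : nat, forall n m w,
      admissible gamma lambda n m w -> (n0 <= n)%N ->
      INR (k n) <= eps * (INR n / log2 (INR n))) ->
  exists n0 : nat, forall n m w, admissible gamma lambda n m w -> (n0 <= n)%N ->
     (1 <= w)%N /\ (k n < m)%N.
Proof.
move=> gamma_pos lambda_pos k_small.
have [n0 k_le] := k_small (lambda / 2) ltac:(Lra.lra).
have [n1 n1_gt] := INR_unbounded (2 / lambda).
exists (Nat.max n0 (Nat.max n1 2)) => n m w adm n_large.
have {k_le}k_le := k_le n m w adm ltac:(lia).
case: adm => m_def [w_def _].
have n_ge2 : 2 <= INR n by apply: (le_INR 2); lia.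
have n_gt : 2 / lambda < INR n by apply: (Rlt_le_trans _ _ _ n1_gt); apply: le_INR; lia.
have ratio_le : INR n / log2 (INR n) <= INR n.
  have log_ge1 := log2_ge1 n_ge2.
  apply: (Rle_trans _ (INR n * 1)); last by rewrite Rmult_1_r; exact: Rle_refl.
  apply: Rmult_le_compat_l; first exact: pos_INR.
  by rewrite -Rinv_1; apply: Rinv_le_contravar; Lra.lra.
have k_le_half : INR (k n) <= INR m / 2 by rewrite -m_def; Lra.nra.
have m_gt2 : 2 < INR m.
  have two_eq : lambda * (2 / lambda) = 2.
    by rewrite /Rdiv Rmult_comm Rmult_assoc Rinv_l; Lra.lra.
  by rewrite -m_def -{1}two_eq; apply: Rmult_lt_compat_l.
split; last by apply/ssrnat.ltP/INR_lt; Lra.lra.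
rewrite lt0n; apply/eqP => w0; rewrite w0 /= in w_def.
have : 0 < gamma * INR n by apply: Rmult_lt_0_compat; Lra.lra.
Lra.lra.
Qed.

Theorem mainTheorem4 (gamma lambda : R) (k : nat -> nat) :
  is_rational gamma -> is_rational lambda ->
  0 < gamma < 1 / 2 ->
  0 < lambda < hbin gamma ->
  (forall n m w, admissible gamma lambda n m w -> (2 <= k n)%nat) ->
  (* k(n) = o(n / log n) along admissible n *)
  (forall eps, 0 < eps -> exists n0 : nat, forall n m w,
      admissible gamma lambda n m w -> (n0 <= n)%nat ->
      INR (k n) <= eps * (INR n / log2 (INR n))) ->
  (* E[(X - EX)^k] = Theta(sum over robust V of |T_V| N^{-lambda dim V}) *)
  exists (c1 c2 : R) (n0 : nat), 0 < c1 /\ 0 < c2 /\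
    forall n m w, admissible gamma lambda n m w -> (n0 <= n)%nat ->
      c1 * robust_sum (k n) m n w <= central_moment (k n) m n w /\
      central_moment (k n) m n w <= c2 * robust_sum (k n) m n w.
Proof.
move=> _ _ [gamma_pos _] [lambda_pos _] _ k_small.
have [n0 large] := admissible_eventually gamma_pos lambda_pos k_small.
exists (/ 4), 2, n0; split; first by Lra.lra.
split=> [|n m w adm n_large]; first by Lra.lra.
have [w_pos km] := large n m w adm n_large.
have [lower upper] := moment_vs_robust_sum n w_pos (small_pk km).
split; apply/RleP.
- by rewrite RmultE RinvE IZRposE INRE GRing.mulrC.
- by rewrite RmultE R2E.
Qed.
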